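(* Let $m\ge1$, $n\ge1$, fix $t_0\in\mathbb{Z}^m$ and let $\mathcal{Z}=\{t\in\mathbb{Z}^m\mid t\ge t_0\}$. Let $T=(T^1,\dots,T^m)\in\mathbb{N}^m$, $T\ne0$. Let $A_\alpha\colon\mathcal{Z}\to\mathcal{M}_n(\mathbb{C})$, $\alpha\in\{1,\dots,m\}$, satisfy $$A_\alpha(t+1_\beta)A_\beta(t)=A_\beta(t+1_\alpha)A_\alpha(t),\quad \forall t\in\mathcal{Z},\ \forall\alpha,\beta,$$ and suppose $A_\alpha(t)$ is invertible for all $\alpha$ and all $t\in\mathcal{Z}$. Let $\Phi(t)=\chi(t,t_0)$, $t\in\mathcal{Z}$. Assume there exist a function $P\colon\mathcal{Z}\to\mathcal{M}_n(\mathbb{C})$, periodic of period $T$ (i.e. $P(t+T)=P(t)$ for all $t\in\mathcal{Z}$), and a constant invertible matrix $B\in\mathcal{M}_n(\mathbb{C})$ such that $\Phi(t)=P(t)B^{|t|}$ for all $t\ge t_0$, where $|t|=t^1+\dots+t^m$. Consider the recurrences $$x(t+1_\alpha)=A_\alpha(t)x(t),\quad\forall t\ge t_0,\ \forall\alpha\in\{1,\dots,m\},\qquad (1)$$ $$y(t+1_\alpha)=B\,y(t),\quad\forall t\ge t_0,\ \forall\alpha\in\{1,\dots,m\},\qquad (2)$$ for functions $x,y\colon\mathcal{Z}\to\mathbb{C}^n$. Then (each $P(t)$ being invertible) if $y$ is a solution of (2), then $x(t):=P(t)y(t)$ is a solution of (1); and conversely, if $x$ is a solution of (1), then $y(t):=P(t)^{-1}x(t)$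 is a solution of (2).
   Context: $\mathbb{N}=\{0,1,2,\dots\}$; $1_\alpha\in\mathbb{Z}^m$ has $1$ in position $\alpha$ and $0$ elsewhere; $s\le t$ in $\mathbb{Z}^m$ means $s^\alpha\le t^\alpha$ for all $\alpha$. Under the compatibility relations, for each $s\in\mathcal{Z}$ there is a unique $\chi(\cdot,s)\colon\{t\in\mathcal{Z}\mid t\ge s\}\to\mathcal{M}_n(\mathbb{C})$ with $\chi(s,s)=I_n$ and $\chi(t+1_\alpha,s)=A_\alpha(t)\chi(t,s)$ for all $t\ge s$ and all $\alpha$ (the transition matrix). Negative integer powers of $B$ are powers of $B^{-1}$. *)

(* complex numbers are R[i] for R : realType (i.e. C). *)
From HB Require Import structures.
From mathcomp Require Import all_boot all_order all_algebra.
From mathcomp Require Import complex.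
From mathcomp Require Import reals.
Set Implicit Arguments. Unset Strict Implicit. Unset Printing Implicit Defensive.
Import Order.TTheory GRing.Theory Num.Theory.
Local Open Scope ring_scope.

(* points of Z^m are row vectors 'rV[int]_m *)
Definition ptle (m : nat) (s t : 'rV[int]_m) : Prop := forall i : 'I_m, s 0 i <= t 0 i.

Definition unitv (m : nat) (a : 'I_m) : 'rV[int]_m := delta_mx 0 a.

Definition sumpt (m : nat) (t : 'rV[int]_m) : int := \sum_(i < m) t 0 i.

From HB Require Import structures.
From mathcomp Require Import all_boot all_order all_algebra.
From mathcomp Require Import complex.
From mathcomp Require Import reals.
Set Implicit Arguments. Unset Strict Implicit. Unset Printing Implicit Defensive.
Import Order.TTheory GRing.Theory Num.Theory.
Local Open Scope ring_scope.
Local Open Scope complex_scope.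

(* Every point of the cone is reached from t0 by unit steps, so Phi, a product
   of invertible A's, is invertible, and hence so is P t = Phi t * B^-|t|.
   Comparing Phi (t + 1_a) = A_a(t) Phi(t) with the Floquet form, and using
   |t + 1_a| = |t| + 1, gives P(t + 1_a) B = A_a(t) P(t), which is exactly the
   statement that P conjugates the constant system y -> B y into the system x. *)

Section Lattice.

Variable m : nat.
Implicit Types s t : 'rV[int]_m.

Lemma unitvE (a i : 'I_m) : unitv a 0 i = (a == i)%:R.
Proof. by rewrite /unitv mxE /= eq_sym. Qed.

Lemma sumptD s t : sumpt (s + t) = sumpt s + sumpt t.
Proof. by rewrite /sumpt -big_split; apply: eq_bigr => i _; rewrite mxE. Qed.

Lemma sumpt_unitv (a : 'I_m) : sumpt (unitv a) = 1.
Proof.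
rewrite /sumpt (bigD1 a) //= unitvE eqxx big1 ?addr0 // => i.
by rewrite unitvE eq_sym => /negPf ->.
Qed.

Lemma ptle_addunitv s t (a : 'I_m) : ptle s t -> ptle s (t + unitv a).
Proof. by move=> le_st i; rewrite mxE unitvE (le_trans (le_st i)) ?lerDl. Qed.

Lemma ptle_sumpt_ge0 s t : ptle s t -> 0 <= sumpt (t - s).
Proof. by move=> le_st; apply: sumr_ge0 => i _; rewrite !mxE subr_ge0. Qed.

Lemma ptle_sumpt_eq0 s t : ptle s t -> sumpt (t - s) = 0 -> t = s.
Proof.
move=> le_st /eqP; rewrite psumr_eq0 => [/allP eq0|i _]; last first.
  by rewrite !mxE subr_ge0.
apply/matrixP => i j; rewrite (ord1 i); apply/eqP.
by have := eq0 j (mem_index_enum j); rewrite !mxE subr_eq0.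
Qed.

Lemma ptle_subunitv s t : ptle s t -> t != s ->
  exists a : 'I_m, ptle s (t - unitv a).
Proof.
move=> le_st neq_ts.
have [a lt_sta] : exists a, s 0 a < t 0 a.
  case: (pickP (fun a => s 0 a < t 0 a)) => [a lt_a|no_lt]; first by exists a.
  case/eqP: neq_ts; apply/matrixP => i j; rewrite (ord1 i); apply/eqP.
  by rewrite eq_le le_st andbT leNgt no_lt.
exists a => k; rewrite !mxE /=.
by case: eqP => [->|_]; rewrite ?subr0 // lerBrDr lezD1.
Qed.

Lemma ptle_ind s (Q : 'rV[int]_m -> Prop) :
  Q s -> (forall t, ptle s t -> Q t -> forall a, Q (t + unitv a)) ->
  forall t, ptle s t -> Q t.
Proof.
move=> Qs Qstep t le_st.
have [k] : exists k : nat, sumpt (t - s) = k%:Z.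
  by exists `|sumpt (t - s)|%N; rewrite gez0_abs // ptle_sumpt_ge0.
elim: k t le_st => [|k IH] t le_st sum_k.
  by rewrite (ptle_sumpt_eq0 le_st).
have [|a le_s_ta] := ptle_subunitv le_st.
  apply: contra_eq_neq sum_k => ->.
  by rewrite subrr /sumpt big1 // => i; rewrite mxE.
rewrite -(subrK (unitv a) t); apply: (Qstep _ le_s_ta); apply: IH le_s_ta _.
apply: (addIr 1); rewrite -(sumpt_unitv a) -sumptD addrAC subrK sum_k.
by rewrite sumpt_unitv -addn1 PoszD.
Qed.

End Lattice.

Section Floquet.

Variables (R : realType) (m n : nat) (t0 : 'rV[int]_m).
Variable A : 'I_m -> 'rV[int]_m -> 'M[R[i]]_n.+1.
Variables (Phi P : 'rV[int]_m -> 'M[R[i]]_n.+1) (B : 'M[R[i]]_n.+1).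

Hypothesis hAinv : forall t, ptle t0 t -> forall a : 'I_m, A a t \in unitmx.
Hypothesis hPhi0 : Phi t0 = 1.
Hypothesis hPhiS : forall t, ptle t0 t -> forall a : 'I_m,
  Phi (t + unitv a) = A a t * Phi t.
Hypothesis hB : B \in unitmx.
Hypothesis hfloq : forall t, ptle t0 t -> Phi t = P t * B ^ (sumpt t).

Lemma transition_unitmx t : ptle t0 t -> Phi t \in unitmx.
Proof.
apply: (ptle_ind (Q := fun t => Phi t \in unitmx)) => [|s le_s unit_s a].
  by rewrite hPhi0 unitmx1.
by rewrite hPhiS // unitmx_mul hAinv.
Qed.

Lemma floquet_unitmx t : ptle t0 t -> P t \in unitmx.
Proof.
by move=> le_t; have := transition_unitmx le_t; rewrite hfloq // unitmx_mul => /andP[].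
Qed.

Lemma floquet_step t (a : 'I_m) : ptle t0 t ->
  P (t + unitv a) * B = A a t * P t.
Proof.
move=> le_t; apply: (mulIr (unitrXz (sumpt t) hB)).
have := hPhiS le_t a.
rewrite (hfloq (ptle_addunitv a le_t)) (hfloq le_t) sumptD sumpt_unitv.
by rewrite (addrC (sumpt t)) exprzDr // expr1z !mulrA.
Qed.

End Floquet.

Theorem theorem2p18 (R : realType) (m n : nat) (hm : (0 < m)%N)
  (t0 : 'rV[int]_m) (T : 'rV[int]_m)
  (hT0 : forall i : 'I_m, 0 <= T 0 i) (hT : T != 0)
  (A : 'I_m -> 'rV[int]_m -> 'M[R[i]]_n.+1)
  (hcompat : forall t, ptle t0 t -> forall a b : 'I_m,
      A a (t + unitv b) * A b t = A b (t + unitv a) * A a t)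
  (hAinv : forall t, ptle t0 t -> forall a : 'I_m, A a t \in unitmx)
  (Phi : 'rV[int]_m -> 'M[R[i]]_n.+1)
  (hPhi0 : Phi t0 = 1)
  (hPhiS : forall t, ptle t0 t -> forall a : 'I_m,
      Phi (t + unitv a) = A a t * Phi t)
  (P : 'rV[int]_m -> 'M[R[i]]_n.+1)
  (hPper : forall t, ptle t0 t -> P (t + T) = P t)
  (B : 'M[R[i]]_n.+1) (hB : B \in unitmx)
  (hfloq : forall t, ptle t0 t -> Phi t = P t * B ^ (sumpt t)) :
  (forall t, ptle t0 t -> P t \in unitmx) /\
  (forall y : 'rV[int]_m -> 'cV[R[i]]_n.+1,
     (forall t, ptle t0 t -> forall a : 'I_m, y (t + unitv a) = B *m y t) ->
     forall t, ptle t0 t -> forall a : 'I_m,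
       P (t + unitv a) *m y (t + unitv a) = A a t *m (P t *m y t)) /\
  (forall x : 'rV[int]_m -> 'cV[R[i]]_n.+1,
     (forall t, ptle t0 t -> forall a : 'I_m, x (t + unitv a) = A a t *m x t) ->
     forall t, ptle t0 t -> forall a : 'I_m,
       invmx (P (t + unitv a)) *m x (t + unitv a) = B *m (invmx (P t) *m x t)).
Proof.
have P_unit := floquet_unitmx hAinv hPhi0 hPhiS hfloq.
have step := floquet_step hPhiS hB hfloq.
split=> [//|]; split=> [y hy t le_t a | x hx t le_t a].
  by rewrite hy // !mulmxA mulmxE step.
have eA : A a t = P (t + unitv a) *m B *m invmx (P t).
  by rewrite mulmxE step // -!mulmxE mulmxK ?P_unit.
rewrite hx // eA -!mulmxA mulKmx // P_unit //.
exact: ptle_addunitv.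
Qed.
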